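(* Let $p$ be prime, let $c_1,\dots,c_k$ be positive integers, and let $v\ge2$ be an integer coprime to $p$. There exist a collection of $v$-adic intervals $\{I_\ell\}_{\ell\ge1}$ in $[0,1)$ and positive integers $\alpha_\ell$ such that: (1) for each $i\in\{1,\dots,k\}$, letting $J^i_\ell$ be the smallest $pc_i$-adic interval containing $I_\ell$, the intervals $\{J^i_\ell\}_{\ell\ge1}$ are pairwise disjoint and contained in $[0,1)$; in particular the $I_\ell$ are pairwise disjoint; (2) for each $\alpha\in\mathbb{N}$ there are only finitely many $\ell$ with $\alpha_\ell=\alpha$; (3) for each $\ell\ge1$ and each $i$, there is a point $\zeta(J^i_\ell)$ which is an interior endpoint of some $pc_i$-adic child of $J^i_\ell$ such that $$0<\zeta(J^i_\ell)-Z(I_\ell)\le v^{-100\alpha_\ell}|I_\ell|.$$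
   Context: For a positive integer $N$, the $N$-adic intervals are $[\frac{k-1}{N^s},\frac{k}{N^s})$, $s,k\in\mathbb{Z}$, with $N$-adic children the $N$ equal-length subintervals $[\frac{k-1}{N^s}+\frac{j-1}{N^{s+1}},\frac{k-1}{N^s}+\frac{j}{N^{s+1}})$, $1\le j\le N$. For a $v$-adic interval $I=[\frac{k-1}{v^s},\frac{k}{v^s})$, $Z(I)=\frac{k-1}{v^s}+\frac{v-1}{v^{s+1}}$ is the left endpoint of its last $v$-adic child. An interior endpoint of a child of $J$ is an endpoint of that child lying in the interior of $J$. $|I|$ is the length of $I$. *)

(* Intervals [a,b) with rational endpoints, represented by
   their endpoint pair (a, b). All N-adic intervals have rational endpoints. *)
From mathcomp Require Import all_boot all_order all_algebra.
Set Implicit Arguments. Unset Strict Implicit. Unset Printing Implicit Defensive.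
Import Order.TTheory GRing.Theory Num.Theory.
Local Open Scope ring_scope.

Definition itv := (rat * rat)%type.

Definition mem_itv (I : itv) (x : rat) : Prop := I.1 <= x /\ x < I.2.

Definition sub_itv (I J : itv) : Prop := forall x, mem_itv I x -> mem_itv J x.

Definition disj_itv (I J : itv) : Prop := forall x, ~ (mem_itv I x /\ mem_itv J x).

Definition len (I : itv) : rat := I.2 - I.1.

Definition is_adic (N : nat) (I : itv) : Prop :=
  exists (s k : int),
    I.1 = (k - 1)%:~R / (N%:R ^ s) /\ I.2 = k%:~R / (N%:R ^ s).

Definition child (N : nat) (J : itv) (j : nat) : itv :=
  (J.1 + (j.-1)%:R / N%:R * len J, J.1 + j%:R / N%:R * len J).

Definition interior_child_endpoint (N : nat) (J : itv) (x : rat) : Prop :=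
  exists j : nat, (1 <= j <= N)%N /\
    (x = (child N J j).1 \/ x = (child N J j).2) /\ J.1 < x /\ x < J.2.

Definition smallest_adic (N : nat) (I J : itv) : Prop :=
  is_adic N J /\ sub_itv I J /\
  forall J', is_adic N J' -> sub_itv I J' -> sub_itv J J'.

(* Z(I): left endpoint of the last v-adic child of the v-adic interval I,
   i.e. (k-1)/v^s + (v-1)/v^(s+1) = I.1 + (v-1)/v * |I| *)
Definition Zpt (v : nat) (I : itv) : rat := I.1 + (v.-1)%:R / v%:R * len I.

Definition unit_itv : itv := (0, 1).

From mathcomp Require Import all_boot all_order all_algebra.
From mathcomp Require Import cyclic.
From mathcomp Require Import ring lra zify.

(** Take centers x_l = j / p^(L_l) with j = 1 mod v and prime to p, and exponents
    L_l divisible by totient v and growing fast, so that p^(L_l) = 1 mod v and the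
    x_l decrease geometrically. For s + 1 a multiple of totient (p^(L_l)) we have
    v^(s+1) = 1 mod p^(L_l), and this produces a v-adic interval I_l of level s
    with x_l - Z(I_l) = j / (p^(L_l) v^(s+1)): positive, and tiny compared with
    |I_l| = v^-s. For N = p c_i, x_l has a finite N-adic expansion; if its last
    digit sits at level t, then x_l is an interior endpoint of a child of the
    N-adic interval J of level t - 1 around it, at distance at least N^-t from
    the boundary of J. Taking s so large that |I_l| <= N^-t puts I_l inside J,
    and J is then the smallest N-adic interval containing I_l. All these
    intervals lie in [3 x_l / 4, 5 x_l / 4), and these windows are disjoint. *)

Lemma expn_totientM_mod (a n m : nat) : coprime a n -> 1 < n ->
  a ^ (totient n * m) %% n = 1.
Proof.
move=> can n1.
by rewrite expnM -modnXm Euler_exp_totient // modnXm exp1n modn_small.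
Qed.

Lemma Zpt_index_eq {v P K j s : nat} : 1 < v -> P %% v = 1 -> j %% v = 1 ->
  P * K + 1 = v ^ s.+1 -> v * ((j * K).+1 %/ v).-1 + v.-1 = j * K.
Proof.
move=> v1 Pv jv PK.
have vK : v %| K + 1.
  have : v %| P * K + 1 by rewrite PK expnS dvdn_mulr.
  by rewrite /dvdn -modnDml -modnMml Pv mul1n modnDml.
have /dvdnP [q Eq] : v %| (j * K).+1.
  by rewrite /dvdn -addn1 -modnDml -modnMml jv mul1n modnDml.
case: q Eq => // q Eq; rewrite Eq mulnK; last lia.
by move: Eq; rewrite mulSn mulnC; lia.
Qed.

Lemma not_dvdn_exact_level (P N j t : nat) : 0 < N ->
  coprime P j -> P %| N ^ t -> (forall t', P %| N ^ t' -> t <= t') -> 0 < t ->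
  ~~ (N %| j * (N ^ t %/ P)).
Proof.
move=> N0 cPj Pt tmin t0; apply/negP => /dvdnP [y Ey].
have : P %| j * N ^ t.-1.
  have e : j * N ^ t.-1 * N = y * P * N.
    rewrite -mulnA -expnSr prednK // -(divnK Pt) mulnA Ey; ring.
  by apply/dvdnP; exists y; apply/eqP; rewrite -(eqn_pmul2r N0) e.
by rewrite Gauss_dvdr // => /tmin; lia.
Qed.

Lemma modn_range (N W : nat) : 0 < N -> ~~ (N %| W) -> 0 < W %% N < N.
Proof. by move=> N0 NW; rewrite ltn_pmod // andbT lt0n. Qed.

Import Order.TTheory GRing.Theory Num.Theory.
Local Open Scope ring_scope.

Definition adic (N T u : nat) : itv := (u%:R / N%:R ^+ T, u.+1%:R / N%:R ^+ T).

Lemma is_adic_adic (N T u : nat) : is_adic N (adic N T u).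
Proof. by exists T, u.+1; rewrite -exprnP /= -addn1 PoszD addrK. Qed.

Lemma len_adic (N T u : nat) : len (adic N T u) = (N%:R ^+ T)^-1.
Proof. by rewrite /len /= -mulrBl -natr1 addrAC subrr add0r mul1r. Qed.

Lemma Zpt_adic (v s u : nat) : (0 < v)%N ->
  Zpt v (adic v s u) = (v * u + v.-1)%:R / v%:R ^+ s.+1.
Proof.
move=> v0; have v0' : v%:R != 0 :> rat by rewrite pnatr_eq0 -lt0n.
by rewrite /Zpt len_adic /= exprS natrD natrM; field; rewrite expf_neq0.
Qed.

Lemma mem_itv_of_Zpt_lt {v : nat} {I : itv} {x : rat} : (0 < v)%N ->
  I.1 <= I.2 -> Zpt v I < x -> x < Zpt v I + len I / v%:R -> I.1 < x /\ x < I.2.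
Proof.
move=> v0 I12 Zx xZ.
have v0' : 0 < v%:R :> rat by rewrite ltr0n.
have ZI2 : Zpt v I + len I / v%:R = I.2.
  by rewrite /Zpt /len -subn1 natrB //; field; rewrite lt0r_neq0.
have I1Z : I.1 <= Zpt v I.
  by rewrite /Zpt lerDl mulr_ge0 ?divr_ge0 ?ler0n // subr_ge0.
lra.
Qed.

Lemma ltr_intr_div (m n : int) (D : rat) : 0 < D -> (m%:~R / D < n%:~R / D) = (m < n).
Proof. by move=> D0; rewrite ltr_pM2r ?invr_gt0 // ltr_int. Qed.

Lemma ler_intr_div (m n : int) (D : rat) : 0 < D -> (m%:~R / D <= n%:~R / D) = (m <= n).
Proof. by move=> D0; rewrite ler_pM2r ?invr_gt0 // ler_int. Qed.

Lemma sub_itv_int_step {a c d : int} {D y : rat} : 0 < D ->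
  mem_itv (a%:~R / D, (a + 1)%:~R / D) y -> mem_itv (c%:~R / D, d%:~R / D) y ->
  sub_itv (a%:~R / D, (a + 1)%:~R / D) (c%:~R / D, d%:~R / D).
Proof.
move=> D0 [/= y1 y2] [/= y3 y4] z [/= z1 z2].
have : c < a + 1 by rewrite -(ltr_intr_div _ _ _ D0) (le_lt_trans y3 y2).
have : a < d by rewrite -(ltr_intr_div _ _ _ D0) (le_lt_trans y1 y4).
move=> ad ca; split.
- by apply: le_trans z1; rewrite ler_intr_div //; lia.
- by apply: lt_le_trans z2 _; rewrite ler_intr_div //; lia.
Qed.

Lemma int_step_no_inner_int {a w : int} {D y : rat} : 0 < D ->
  a%:~R / D <= y -> y < w%:~R / D -> w%:~R / D < (a + 1)%:~R / D -> False.
Proof.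
by move=> D0 ay yw; move: (le_lt_trans ay yw); rewrite !ltr_intr_div //; lia.
Qed.

Lemma intr_div_exprz_rescale {N d : nat} {s t : int} (a : int) : (0 < N)%N ->
  t = s + d%:Z ->
  a%:~R / N%:R ^ s = (a * (N ^ d)%N%:Z)%:~R / N%:R ^ t :> rat.
Proof.
move=> N0 ->; have N0' : N%:R != 0 :> rat by rewrite pnatr_eq0 -lt0n.
rewrite intrM (_ : (N ^ d)%N%:~R = N%:R ^+ d); last by rewrite -natrX.
rewrite expfzDr // -exprnP; field.
by rewrite expf_neq0 //= expfz_neq0.
Qed.

Lemma adic_intr (N T u : nat) :
  adic N T u = ((u%:Z)%:~R / N%:R ^+ T, (u%:Z + 1)%:~R / N%:R ^+ T).
Proof. by rewrite /adic intrD -natr1. Qed.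

Lemma smallest_adic_adic {N T W : nat} {I : itv} : (0 < N)%N ->
  I.1 < W%:R / N%:R ^+ T.+1 -> W%:R / N%:R ^+ T.+1 < I.2 ->
  sub_itv I (adic N T (W %/ N)) -> smallest_adic N I (adic N T (W %/ N)).
Proof.
move=> N0 h1 h2 sIJ; split; [exact: is_adic_adic | split => //].
(* A coarser J' meets J at x, hence contains it; a finer one cannot contain both
   I.1 and x, an endpoint at level T.+1. *)
move=> [a b] [s [k [/= -> ->]]] sIJ'.
set x := W%:R / _ in h1 h2.
have [/= y1 y2] := sIJ' I.1 (conj (lexx _) (lt_trans h1 h2)).
have [/= x1 x2] := sIJ' x (conj (ltW h1) h2).
case: (lerP s T%:Z) => [sT | Ts].
- have [d Td] : exists d : nat, T%:Z = s + d%:Z by exists `|T%:Z - s|%N; lia.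
  rewrite !(intr_div_exprz_rescale _ N0 Td) -!exprnP in x1 x2 *.
  have := sIJ x (conj (ltW h1) h2); rewrite adic_intr => xJ.
  by apply: (sub_itv_int_step _ xJ (conj x1 x2)); rewrite exprn_gt0 // ltr0n.
- have [d sTd] : exists d : nat, s = T.+1%:Z + d%:Z by exists `|s - T.+1%:Z|%N; lia.
  have xE : x = (W * N ^ d)%N%:Z%:~R / N%:R ^ s.
    by rewrite /x exprnP -[W%:R]/((W%:Z)%:~R) (intr_div_exprz_rescale _ N0 sTd).
  rewrite xE in x2 h1; exfalso; apply: (int_step_no_inner_int _ y1 h1); last by rewrite subrK.
  by rewrite sTd -exprnP exprn_gt0 // ltr0n.
Qed.

Lemma adic_margin {N : nat} (T : nat) {W : nat} : (0 < N)%N -> ~~ (N %| W)%N ->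
  (adic N T (W %/ N)).1 + (N%:R ^+ T.+1)^-1 <= W%:R / N%:R ^+ T.+1 /\
  W%:R / N%:R ^+ T.+1 + (N%:R ^+ T.+1)^-1 <= (adic N T (W %/ N)).2.
Proof.
move=> N0 NW; set D := N%:R ^+ T.+1.
have D0 : 0 < D by rewrite exprn_gt0 // ltr0n.
have N0' : N%:R != 0 :> rat by rewrite pnatr_eq0 -lt0n.
have J1 : (adic N T (W %/ N)).1 = (W %/ N * N)%:R / D.
  by rewrite /= /D exprSr natrM; field; rewrite N0' expf_neq0.
have J2 : (adic N T (W %/ N)).2 = (W %/ N * N + N)%:R / D.
  by rewrite /= /D exprSr -mulSnr natrM; field; rewrite N0' expf_neq0.
have WE := divn_eq W N.
have rN := modn_range _ _ N0 NW.
have addD (m : nat) : m%:R / D + D^-1 = m.+1%:R / D by rewrite -natr1 mulrDl mul1r.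
rewrite J1 J2 !addD !ler_pM2r ?invr_gt0 // !ler_nat; lia.
Qed.

Lemma interior_child_endpoint_adic {N T W : nat} : (0 < N)%N -> ~~ (N %| W)%N ->
  interior_child_endpoint N (adic N T (W %/ N)) (W%:R / N%:R ^+ T.+1).
Proof.
move=> N0 NW; have [m1 m2] := adic_margin T N0 NW.
have Dinv : 0 < (N%:R ^+ T.+1)^-1 :> rat by rewrite invr_gt0 exprn_gt0 // ltr0n.
have rN := modn_range _ _ N0 NW.
exists (W %% N)%N; split; first by apply/andP; split; lia.
split; last by split; lra.
have N0' : N%:R != 0 :> rat by rewrite pnatr_eq0 -lt0n.
right; rewrite /child len_adic /= {1}(divn_eq W N) natrD natrM exprSr.
by field; rewrite N0' expf_neq0.
Qed.

Lemma Zpt_adic_gap {v s u P K j : nat} : (0 < v)%N -> (0 < P)%N ->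
  (P * K + 1 = v ^ s.+1)%N -> (v * u + v.-1 = j * K)%N ->
  j%:R / P%:R - Zpt v (adic v s u) = j%:R / (P%:R * v%:R ^+ s.+1).
Proof.
move=> v0 P0 PK uK.
have v0' : v%:R != 0 :> rat by rewrite pnatr_eq0 -lt0n.
have P0' : P%:R != 0 :> rat by rewrite pnatr_eq0 -lt0n.
have KE : K%:R = (v%:R ^+ s.+1 - 1) / P%:R :> rat.
  by rewrite -natrX -PK natrD natrM addrK mulrC mulKf.
by rewrite Zpt_adic // uK natrM KE; field; rewrite P0' expf_neq0.
Qed.

Lemma sub_itv_trans (I J K : itv) : sub_itv I J -> sub_itv J K -> sub_itv I K.
Proof. by move=> IJ JK x /IJ /JK. Qed.

Lemma disj_itv_sub (I I' J J' : itv) :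
  sub_itv I I' -> sub_itv J J' -> disj_itv I' J' -> disj_itv I J.
Proof. by move=> II' JJ' dIJ x [/II' xI /JJ' xJ]; apply: (dIJ x). Qed.

Lemma disj_itvC (I J : itv) : disj_itv I J -> disj_itv J I.
Proof. by move=> dIJ x [xJ xI]; apply: (dIJ x). Qed.

Lemma sub_itv_of_margin {I J : itv} {x r : rat} :
  I.1 < x -> x < I.2 -> len I <= r -> J.1 + r <= x -> x + r <= J.2 -> sub_itv I J.
Proof. by rewrite /len => h1 h2 hr hJ1 hJ2 z [/= hz1 hz2]; split; lra. Qed.

Definition window (x : rat) : itv := (3 / 4 * x, 5 / 4 * x).

Lemma sub_window (I : itv) (x : rat) :
  I.1 <= x -> x < I.2 -> 4 * len I <= x -> sub_itv I (window x).
Proof. by rewrite /len => h1 h2 hl z [/= hz1 hz2]; split => /=; lra. Qed.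

Lemma disj_window (x y : rat) : 0 < y -> 2 * y <= x -> disj_itv (window x) (window y).
Proof. by move=> y0 yx z [[/= ? ?] [/= ? ?]]; lra. Qed.

Lemma window_sub_unit (x : rat) : 0 < x -> x < 1 / 2 -> sub_itv (window x) unit_itv.
Proof. by move=> x0 x1 z [/= ? ?]; split => /=; lra. Qed.

Section Construction.

Variables (p k : nat) (c : 'I_k -> nat) (v : nat).
Hypotheses (p_prime : prime p) (c_gt0 : forall i, (0 < c i)%N) (v_ge2 : (2 <= v)%N)
  (v_coprime_p : coprime v p).

Local Notation N i := (p * c i)%N.

(* [vlevel l].+1 is a multiple of [totient (denom l)], and [vquot l] is
   (v ^ (vlevel l).+1 - 1) / denom l. *)
Definition prodN := (\prod_(i < k) N i)%N.
Definition num := (v * p * prodN).+1.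
Definition expo l := (totient v * (num * v ^ (100 * l.+1)))%N.
Definition denom l := (p ^ expo l)%N.
Definition vlevel l := (totient (denom l) * (denom l * prodN ^ expo l).+1).-1.
Definition vquot l := (v ^ (vlevel l).+1 %/ denom l)%N.

Lemma p_gt1 : (1 < p)%N. Proof. exact: prime_gt1. Qed.

Lemma N_gt1 i : (1 < N i)%N. Proof. by have := c_gt0 i; have := p_gt1; nia. Qed.

Lemma prodN_gt0 : (0 < prodN)%N.
Proof. by apply: prodn_gt0 => i; have := N_gt1 i; lia. Qed.

Lemma N_le_prodN i : (N i <= prodN)%N.
Proof. by apply: dvdn_leq prodN_gt0 _; rewrite /prodN (bigD1 i) //= dvdn_mulr. Qed.

Lemma num_mod_v : (num %% v = 1)%N.
Proof. by rewrite /num -addn1 -mulnA mulnC modnMDl modn_small. Qed.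

Lemma coprime_p_num : coprime p num.
Proof.
rewrite coprime_sym -coprime_modl /num -addn1 mulnAC modnMDl modn_small ?coprime1n //.
exact: p_gt1.
Qed.

Lemma four_le_num : (4 <= num)%N.
Proof. by have := prodN_gt0; have := p_gt1; rewrite /num; nia. Qed.

Lemma N_le_num i : (4 * N i <= num)%N.
Proof.
have : (4 <= v * p)%N by rewrite (_ : 4 = 2 * 2)%N // leq_mul // p_gt1.
by rewrite /num; have := N_le_prodN i; nia.
Qed.

Lemma expo_gt0 l : (0 < expo l)%N.
Proof. by rewrite /expo !muln_gt0 totient_gt0 expn_gt0 /num; lia. Qed.

Lemma denom_double l l' : (l < l')%N -> (2 * denom l <= denom l')%N.
Proof.
move=> ll'; have : (expo l < expo l')%N.
  rewrite /expo ltn_pmul2l ?totient_gt0 1?ltn_pmul2l /num //; last lia.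
  by rewrite ltn_exp2l; lia.
move=> ee'; apply: (@leq_trans (p ^ (expo l).+1)); last by rewrite leq_exp2l // p_gt1.
by rewrite expnS leq_mul2r p_gt1 orbT.
Qed.

Lemma num_pow_lt_denom l : (num * v ^ (100 * l.+1) < denom l)%N.
Proof.
apply: (leq_trans (ltn_expl _ (isT : 1 < 2)%N)).
apply: (@leq_trans (2 ^ expo l)); first by rewrite leq_exp2l // leq_pmull // totient_gt0; lia.
by rewrite leq_exp2r ?p_gt1 ?expo_gt0.
Qed.

Lemma num_double_lt_denom l : (2 * num < denom l)%N.
Proof.
apply: leq_ltn_trans (num_pow_lt_denom l); rewrite mulnC leq_mul2l; apply/orP; right.
by apply: leq_trans v_ge2 _; rewrite -{1}(expn1 v) leq_exp2l //; lia.
Qed.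

Lemma denom_mod_v l : (denom l %% v = 1)%N.
Proof. by rewrite /denom /expo expn_totientM_mod // coprime_sym. Qed.

Lemma denom_gt1 l : (1 < denom l)%N.
Proof. by rewrite /denom -(expn0 p) ltn_exp2l ?p_gt1 ?expo_gt0. Qed.

Lemma denom_vquot l : (denom l * vquot l + 1 = v ^ (vlevel l).+1)%N.
Proof.
have P1 := denom_gt1 l.
rewrite /vquot /vlevel prednK; last by rewrite muln_gt0 totient_gt0; lia.
set e := (v ^ _)%N; have e1 : (e %% denom l = 1)%N.
  by rewrite expn_totientM_mod // /denom coprimeXr.
by rewrite {2}(divn_eq e (denom l)) e1 mulnC.
Qed.

Lemma denom_prodN_lt l : (denom l * prodN ^ expo l < v ^ vlevel l)%N.
Proof.
apply: leq_trans (ltn_expl _ v_ge2); rewrite /vlevel.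
have : (0 < totient (denom l))%N by rewrite totient_gt0; have := denom_gt1 l; lia.
nia.
Qed.

Lemma denom_dvd i l : (denom l %| N i ^ expo l)%N.
Proof. by rewrite expnMn dvdn_mulr. Qed.

(* [(hull_level i l).+1] is the least t with [center l * N i ^ t] integral, and
   [hull_num i l] is that integer. *)
Definition hull_level i l :=
  (ex_minn (ex_intro (fun t => denom l %| N i ^ t)%N _ (denom_dvd i l))).-1.
Definition hull_num i l := (num * (N i ^ (hull_level i l).+1 %/ denom l))%N.

Lemma hull_level_spec i l :
  [/\ denom l %| N i ^ (hull_level i l).+1, hull_level i l < expo l
    & ~~ (N i %| hull_num i l)]%N.
Proof.
rewrite /hull_num /hull_level; case: ex_minnP => t Pt tmin.
have t0 : (0 < t)%N.
  by case: t Pt {tmin} => //; rewrite expn0 dvdn1 => /eqP; have := denom_gt1 l; lia.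
rewrite prednK //; split => //; first by have := tmin _ (denom_dvd i l); lia.
apply: not_dvdn_exact_level => //; first by have := N_gt1 i; lia.
by rewrite /denom coprimeXl // coprime_p_num.
Qed.

Lemma hull_num_ge i l : (4 * N i <= hull_num i l)%N.
Proof.
have [dv _ _] := hull_level_spec i l.
apply: leq_trans (N_le_num i) _; rewrite /hull_num leq_pmulr // divn_gt0.
  by apply: dvdn_leq dv; rewrite expn_gt0; have := N_gt1 i; lia.
by have := denom_gt1 l; lia.
Qed.

Lemma N_level_le_vlevel i l : (N i ^ (hull_level i l).+1 <= v ^ vlevel l)%N.
Proof.
have [_ Tlt _] := hull_level_spec i l.
apply: leq_trans (ltnW (denom_prodN_lt l)); apply: leq_trans (leq_pmull _ _); last first.
  by have := denom_gt1 l; lia.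
apply: (@leq_trans (N i ^ expo l)); first by rewrite leq_pexp2l //; have := N_gt1 i; lia.
by rewrite leq_exp2r ?N_le_prodN ?expo_gt0.
Qed.

Definition center l : rat := num%:R / (denom l)%:R.
Definition small_itv l := adic v (vlevel l) ((num * vquot l).+1 %/ v).-1.
Definition hull i l := adic (N i) (hull_level i l) (hull_num i l %/ N i).

Lemma center_gt0 l : 0 < center l.
Proof. by rewrite /center divr_gt0 // ltr0n // (ltn_trans _ (denom_gt1 l)). Qed.

Lemma center_Zpt_gap l :
  center l - Zpt v (small_itv l) = num%:R / ((denom l)%:R * v%:R ^+ (vlevel l).+1).
Proof.
apply: Zpt_adic_gap (denom_vquot l) _; first exact: ltnW.
  exact: ltnW (denom_gt1 l).
exact: Zpt_index_eq v_ge2 (denom_mod_v l) num_mod_v (denom_vquot l).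
Qed.

Lemma center_in_small l : (small_itv l).1 < center l /\ center l < (small_itv l).2.
Proof.
have v0 : 0 < v%:R :> rat by rewrite ltr0n; lia.
have P0 : 0 < (denom l)%:R :> rat by rewrite ltr0n; have := denom_gt1 l; lia.
apply: (mem_itv_of_Zpt_lt (ltnW v_ge2)).
- by rewrite -subr_ge0 -/(len _) len_adic invr_ge0 exprn_ge0 // ltW.
- by rewrite -subr_gt0 center_Zpt_gap divr_gt0 ?mulr_gt0 ?exprn_gt0 // ltr0n.
rewrite -ltrBlDl center_Zpt_gap len_adic -invfM -exprSr ltr_pdivrMr ?mulr_gt0 ?exprn_gt0 //.
rewrite mulrCA mulVf ?mulr1 ?ltr_nat ?expf_neq0 ?lt0r_neq0 //.
by have := num_double_lt_denom l; lia.
Qed.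

Lemma center_hull_num i l :
  center l = (hull_num i l)%:R / (N i)%:R ^+ (hull_level i l).+1.
Proof.
have [dv _ _] := hull_level_spec i l.
have P0 : (denom l)%:R != 0 :> rat by rewrite pnatr_eq0; have := denom_gt1 l; lia.
have -> : (N i)%:R ^+ (hull_level i l).+1 =
    (N i ^ (hull_level i l).+1 %/ denom l)%N%:R * (denom l)%:R :> rat.
  by rewrite -natrM divnK // natrX.
rewrite /center /hull_num natrM invfM mulrA mulfK // pnatr_eq0 -lt0n divn_gt0.
  by apply: dvdn_leq dv; rewrite expn_gt0; have := N_gt1 i; lia.
by have := denom_gt1 l; lia.
Qed.

Lemma small_sub_hull i l : sub_itv (small_itv l) (hull i l).
Proof.
have [h1 h2] := center_in_small l.
have [_ _ NW] := hull_level_spec i l.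
have [m1 m2] := adic_margin (hull_level i l) (ltnW (N_gt1 i)) NW.
rewrite -center_hull_num in m1 m2.
apply: sub_itv_of_margin h1 h2 _ m1 m2.
rewrite len_adic lef_pV2 ?posrE ?exprn_gt0 ?ltr0n ?(ltnW (N_gt1 i)) //; last by lia.
by rewrite -!natrX ler_nat N_level_le_vlevel.
Qed.

Lemma hull_smallest i l : smallest_adic (N i) (small_itv l) (hull i l).
Proof.
have [h1 h2] := center_in_small l.
rewrite (center_hull_num i) in h1 h2.
exact: smallest_adic_adic (ltnW (N_gt1 i)) h1 h2 (small_sub_hull i l).
Qed.

Lemma center_hull_child_endpoint i l :
  interior_child_endpoint (N i) (hull i l) (center l).
Proof.
have [_ _ NW] := hull_level_spec i l.
by rewrite (center_hull_num i); apply: interior_child_endpoint_adic (ltnW (N_gt1 i)) NW.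
Qed.

Lemma center_Zpt_bound l :
  0 < center l - Zpt v (small_itv l) <= v%:R ^- (100 * l.+1) * len (small_itv l).
Proof.
have v0 : 0 < v%:R :> rat by rewrite ltr0n; lia.
have P0 : 0 < (denom l)%:R :> rat by rewrite ltr0n; have := denom_gt1 l; lia.
have V0 : 0 < v%:R ^+ vlevel l :> rat by rewrite exprn_gt0.
have A0 : 0 < v%:R ^+ (100 * l.+1) :> rat by rewrite exprn_gt0.
have key : num%:R * v%:R ^+ (100 * l.+1) < (denom l)%:R * v%:R :> rat.
  rewrite -!natrX -!natrM ltr_nat; apply: leq_trans (num_pow_lt_denom l) _.
  by rewrite leq_pmulr //; lia.
rewrite center_Zpt_gap len_adic exprSr; apply/andP; split.
  by rewrite divr_gt0 ?mulr_gt0 // ltr0n.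
have -> : num%:R / ((denom l)%:R * (v%:R ^+ vlevel l * v%:R)) =
    num%:R * v%:R ^+ (100 * l.+1) / ((denom l)%:R * v%:R) *
    (v%:R ^- (100 * l.+1) / v%:R ^+ vlevel l) :> rat.
  by field; rewrite !lt0r_neq0.
by rewrite ler_piMl ?divr_ge0 ?invr_ge0 ?ltW // ltr_pdivrMr ?mulr_gt0 // mul1r.
Qed.

Lemma small_sub_window l : sub_itv (small_itv l) (window (center l)).
Proof.
have [h1 h2] := center_in_small l.
have P0 : 0 < (denom l)%:R :> rat by rewrite ltr0n; have := denom_gt1 l; lia.
apply: sub_window (ltW h1) h2 _.
rewrite len_adic /center ler_pdivrMr; last by rewrite exprn_gt0 // ltr0n; lia.
rewrite mulrAC ler_pdivlMr // -natrX -!natrM ler_nat.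
apply: leq_mul; first exact: four_le_num.
by apply: leq_trans (ltnW (denom_prodN_lt l)); rewrite leq_pmulr // expn_gt0 prodN_gt0.
Qed.

Lemma hull_sub_window i l : sub_itv (hull i l) (window (center l)).
Proof.
have [_ _ NW] := hull_level_spec i l.
have [m1 m2] := adic_margin (hull_level i l) (ltnW (N_gt1 i)) NW.
rewrite -center_hull_num in m1 m2.
have D0 : 0 < ((N i)%:R ^+ (hull_level i l).+1)^-1 :> rat.
  by rewrite invr_gt0 exprn_gt0 // ltr0n; have := N_gt1 i; lia.
apply: sub_window.
- by apply: le_trans m1; rewrite lerDl ltW.
- by apply: lt_le_trans m2; rewrite ltrDl.
have N0 : (N i)%:R != 0 :> rat by rewrite pnatr_eq0; have := N_gt1 i; lia.
have -> : 4 * len (hull i l) = (4 * N i)%N%:R / (N i)%:R ^+ (hull_level i l).+1.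
  rewrite len_adic [(4 * _)%N%:R]natrM; move: N0 (hull_level i l).
  by move: (N i)%:R => x x0 n; rewrite exprSr; field; rewrite x0 expf_neq0.
by rewrite (center_hull_num i) ler_pM2r ?ler_nat ?hull_num_ge.
Qed.

Lemma window_center_disj l l' : l <> l' ->
  disj_itv (window (center l)) (window (center l')).
Proof.
have key m n : (m < n)%N -> disj_itv (window (center m)) (window (center n)).
  move=> mn; apply: disj_window (center_gt0 n) _.
  have P0 l0 : 0 < (denom l0)%:R :> rat by rewrite ltr0n; have := denom_gt1 l0; lia.
  rewrite /center mulrA ler_pdivrMr // mulrAC ler_pdivlMr // -!natrM ler_nat.
  by rewrite mulnAC mulnC leq_mul2l denom_double ?orbT.
by move=> ne; case: (ltngtP l l') => [ll' | l'l | //]; [exact: key | exact/disj_itvC/key].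
Qed.

Lemma window_center_sub_unit l : sub_itv (window (center l)) unit_itv.
Proof.
apply: window_sub_unit (center_gt0 l) _.
have P0 : 0 < (denom l)%:R :> rat by rewrite ltr0n; have := denom_gt1 l; lia.
have := num_double_lt_denom l; rewrite -(ltr_nat rat) natrM => h.
rewrite /center ltr_pdivrMr //; lra.
Qed.

Lemma small_itv_sub_unit l : sub_itv (small_itv l) unit_itv.
Proof. exact: sub_itv_trans (small_sub_window l) (window_center_sub_unit l). Qed.

Lemma hull_sub_unit i l : sub_itv (hull i l) unit_itv.
Proof. exact: sub_itv_trans (hull_sub_window i l) (window_center_sub_unit l). Qed.

Lemma small_itv_disj l l' : l <> l' -> disj_itv (small_itv l) (small_itv l').
Proof.
by move=> /window_center_disj; apply: disj_itv_sub; apply: small_sub_window.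
Qed.

Lemma hull_disj i l l' : l <> l' -> disj_itv (hull i l) (hull i l').
Proof.
by move=> /window_center_disj; apply: disj_itv_sub; apply: hull_sub_window.
Qed.

End Construction.

Theorem theorem2p5 (p k : nat) (c : 'I_k -> nat) (v : nat) :
  prime p -> (forall i, (0 < c i)%N) -> (2 <= v)%N -> coprime v p ->
  exists (I : nat -> itv) (alpha : nat -> nat) (J : 'I_k -> nat -> itv),
    (forall l, is_adic v (I l) /\ sub_itv (I l) unit_itv) /\
    (forall l, (0 < alpha l)%N) /\
    (* (1) *)
    (forall i l, smallest_adic (p * c i) (I l) (J i l)) /\
    (forall i l l', l <> l' -> disj_itv (J i l) (J i l')) /\
    (forall i l, sub_itv (J i l) unit_itv) /\
    (forall l l', l <> l' -> disj_itv (I l) (I l')) /\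
    (* (2) *)
    (forall a : nat, exists n : nat, forall l, alpha l = a -> (l < n)%N) /\
    (* (3) *)
    (forall i l, exists zeta : rat,
        interior_child_endpoint (p * c i) (J i l) zeta /\
        0 < zeta - Zpt v (I l) /\
        zeta - Zpt v (I l) <= v%:R ^- (100 * alpha l) * len (I l)).
Proof.
move=> pp c0 v2 cvp.
exists (small_itv p k c v), succn, (hull p k c v).
split; [|split; [|split; [|split; [|split; [|split; [|split]]]]]].
- by move=> l; split; [exact: is_adic_adic | exact: small_itv_sub_unit].
- by [].
- exact: hull_smallest.
- exact: hull_disj.
- exact: hull_sub_unit.
- exact: small_itv_disj.
- by move=> a; exists a => l <-.
- move=> i l; exists (center p k c v l).
  split; first exact: center_hull_child_endpoint.
  by apply/andP; apply: center_Zpt_bound.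
Qed.
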